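(* Define: - $I:{}_H\mathcal M\to\mathbb T({}_H\mathcal M)$ by $I(M)=(M,\mathrm{id}_M)$ and $I(f)=f$; - $R:\mathbb T({}_H\mathcal M)\to{}_H\mathcal M^{par}$ by $R(M,T)=(T(M),\pi_{T})$, where $\pi_{T}(h)(m)=T(h\triangleright m)$ for $m\in T(M)$, and $R(f)=f$ on morphisms. Then $I$ and $R$ are fully faithful functors, and the inclusion functor $i:{}_H\mathcal M\to{}_H\mathcal M^{par}$ equals the composite $R\circ I$.
   Context: Throughout, $k$ is a field and $H$ is a Hopf algebra over $k$ with bijective antipode $S$ and Sweedler notation $\Delta(h)=h_{(1)}\otimes h_{(2)}$. A partial $H$-module is a vector space $M$ with linear $\pi:H\to\mathrm{End}_k(M)$ satisfying, for all $h,k\in H$: - $\pi(1_H)=\mathrm{id}$; - $\pi(h)\pi(k_{(1)})\pi(S(k_{(2)}))=\pi(hk_{(1)})\pi(S(k_{(2)}))$; - $\pi(h_{(1)})\pi(S(h_{(2)}))\pi(k)=\pi(h_{(1)})\pi(S(h_{(2)})k)$; - $\pi(h)\pi(S(k_{(1)}))\pi(k_{(2)})=\pi(hS(k_{(1)}))\pi(k_{(2)})$; - $\pi(S(h_{(1)}))\pi(h_{(2)})\pi(k)=\pi(S(h_{(1)}))\pi(h_{(2)}k)$. Morphisms of partial $H$-modules are linear maps commuting with all $\pi(h)$; they form the category ${}_H\mathcal M^{par}$. The inclusion $i$ regards a left $H$-module $M$ as the partial module $\pi(h)(m)=h\triangleright m$. For a left $H$-module $M$ and a linear projection $T$, put $T_h(m)=h_{(1)}\triangleright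 T(S(h_{(2)})\triangleright m)$. $T$ satisfies the c-condition if $T_h\circ T=T\circ T_h$ for all $h$. The category $\mathbb T({}_H\mathcal M)$ is defined as follows: - objects are pairs $(M,T)$ with $M$ a left $H$-module and $T$ a projection satisfying the c-condition; - morphisms $(M,T)\to(N,S)$ are linear maps $f:T(M)\to S(N)$ with $f(T(h\triangleright m))=S(h\triangleright f(m))$ for all $h\in H$, $m\in T(M)$. *)

From HB Require Import structures.
From mathcomp Require Import all_boot all_order all_algebra.

Set Implicit Arguments.
Unset Strict Implicit.
Unset Printing Implicit Defensive.

Import GRing.Theory.
Local Open Scope ring_scope.

Definition lin (k : fieldType) (U V : lmodType k) (f : U -> V) : Prop :=
  forall (a : k) (u u' : U), f (a *: u + u') = a *: f u + f u'.

Record proj (k : fieldType) (M : lmodType k) := Proj {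
  plin :> {linear M -> M};
  pidem : forall m, plin (plin m) = plin m }.

(* The subspace T(M) = { m | T m = m } of a linear projection T, as a  *)
(* k-vector space in its own right.                                    *)
Section FixSpace.
Variables (k : fieldType) (M : lmodType k) (T : {linear M -> M}).


Definition fixp : {pred M} := fun m => T m == m.

Fact fixp_closed : subsemimod_closed fixp.
Proof.
split; first split.
- by rewrite /in_mem /= /fixp linear0.
- move=> u v; rewrite /in_mem /= /fixp linearD => /eqP -> /eqP ->; exact: eqxx.
- move=> a v; rewrite /in_mem /= /fixp linearZ => /eqP ->; exact: eqxx.
Qed.

HB.instance Definition _ := GRing.isSubmodClosed.Build k M fixp fixp_closed.

Record fixT := FixT { fval :> M; fvalP : fval \in fixp }.
HB.instance Definition _ := [isSub for fval].
HB.instance Definition _ := [Choice of fixT by <:].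
HB.instance Definition _ := [SubChoice_isSubLmodule of fixT by <:].

End FixSpace.

Lemma proj_fixP (k : fieldType) (M : lmodType k) (T : proj M) (m : M) :
  T m \in fixp T.
Proof. by rewrite /in_mem /= /fixp pidem. Qed.

Definition idproj (k : fieldType) (M : lmodType k) : proj M :=
  @Proj k M (idfun : {linear M -> M}) (fun _ => erefl).

Lemma idproj_fixP (k : fieldType) (M : lmodType k) (m : M) :
  m \in fixp (idproj M).
Proof. by rewrite /in_mem /= /fixp. Qed.

Definition mkfixid (k : fieldType) (M : lmodType k) (m : M) : fixT (idproj M) :=
  @FixT k M (idproj M) m (idproj_fixP m).

(* Hopf algebras.  There is no tensor product in MathComp; an element   *)
(* of H (x) H (resp. H (x) H (x) H) is represented by a finite list of  *)
(* pairs (triples) of simple tensors, i.e. Sweedler notation            *)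
(* Delta h = sum_i h1_i (x) h2_i is  Delta h = [:: (h1_i, h2_i); ...].  *)
(* Two lists represent the same tensor iff every bilinear (trilinear)   *)
(* map out of H x H (x H) into any k-vector space V takes the same      *)
(* value on them (universal property of the tensor product).            *)
Section Hopf.
Variables (k : fieldType) (H : algType k).

Definition bilin (V : lmodType k) (phi : H -> H -> V) : Prop :=
  (forall a x x' y, phi (a *: x + x') y = a *: phi x y + phi x' y) /\
  (forall a x y y', phi x (a *: y + y') = a *: phi x y + phi x y').

Definition trilin (V : lmodType k) (phi : H -> H -> H -> V) : Prop :=
  [/\ forall a x x' y z, phi (a *: x + x') y z = a *: phi x y z + phi x' y z,
      forall a x y y' z, phi x (a *: y + y') z = a *: phi x y z + phi x y' z &
      forall a x y z z', phi x y (a *: z + z') = a *: phi x y z + phi x y z'].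

Definition teq2 (s t : seq (H * H)) : Prop :=
  forall (V : lmodType k) (phi : H -> H -> V), bilin phi ->
    \sum_(p <- s) phi p.1 p.2 = \sum_(p <- t) phi p.1 p.2.

Definition teq3 (s t : seq (H * H * H)) : Prop :=
  forall (V : lmodType k) (phi : H -> H -> H -> V), trilin phi ->
    \sum_(p <- s) phi p.1.1 p.1.2 p.2 = \sum_(p <- t) phi p.1.1 p.1.2 p.2.

Record is_hopf (Delta : H -> seq (H * H)) (eps : H -> k) (S : H -> H) : Prop := {
  Delta_lin : forall a h h', teq2 (Delta (a *: h + h'))
                 ([seq (a *: p.1, p.2) | p <- Delta h] ++ Delta h');
  Delta_coassoc : forall h,
    teq3 [seq (q.1, q.2, p.2) | p <- Delta h, q <- Delta p.1]
         [seq (p.1, q.1, q.2) | p <- Delta h, q <- Delta p.2];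
  eps_lin : forall a h h', eps (a *: h + h') = a * eps h + eps h';
  counit_l : forall h, \sum_(p <- Delta h) eps p.1 *: p.2 = h;
  counit_r : forall h, \sum_(p <- Delta h) eps p.2 *: p.1 = h;
  Delta_1 : teq2 (Delta 1) [:: (1, 1)];
  Delta_mul : forall h g, teq2 (Delta (h * g))
                 [seq (p.1 * q.1, p.2 * q.2) | p <- Delta h, q <- Delta g];
  eps_1 : eps 1 = 1;
  eps_mul : forall h g, eps (h * g) = eps h * eps g;
  S_lin : forall a h h', S (a *: h + h') = a *: S h + S h';
  antipode_l : forall h, \sum_(p <- Delta h) S p.1 * p.2 = eps h *: 1;
  antipode_r : forall h, \sum_(p <- Delta h) p.1 * S p.2 = eps h *: 1 }.

Variables (Delta : H -> seq (H * H)) (S : H -> H).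

Record is_hmod (M : lmodType k) (act : H -> M -> M) : Prop := {
  hmod_linl : forall a h h' m, act (a *: h + h') m = a *: act h m + act h' m;
  hmod_linr : forall h, lin (act h);
  hmod_1 : forall m, act 1 m = m;
  hmod_mul : forall h g m, act (h * g) m = act h (act g m) }.

Definition is_hmor (M N : lmodType k) (actM : H -> M -> M) (actN : H -> N -> N)
  (f : M -> N) : Prop :=
  lin f /\ forall h m, f (actM h m) = actN h (f m).

Record is_pmod (P : lmodType k) (pi : H -> P -> P) : Prop := {
  pmod_linl : forall a h h' m, pi (a *: h + h') m = a *: pi h m + pi h' m;
  pmod_linr : forall h, lin (pi h);
  pmod_1 : forall m, pi 1 m = m;
  pmod_ax1 : forall h g m,
    \sum_(p <- Delta g) pi h (pi p.1 (pi (S p.2) m))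
    = \sum_(p <- Delta g) pi (h * p.1) (pi (S p.2) m);
  pmod_ax2 : forall h g m,
    \sum_(p <- Delta h) pi p.1 (pi (S p.2) (pi g m))
    = \sum_(p <- Delta h) pi p.1 (pi (S p.2 * g) m);
  pmod_ax3 : forall h g m,
    \sum_(p <- Delta g) pi h (pi (S p.1) (pi p.2 m))
    = \sum_(p <- Delta g) pi (h * S p.1) (pi p.2 m);
  pmod_ax4 : forall h g m,
    \sum_(p <- Delta h) pi (S p.1) (pi p.2 (pi g m))
    = \sum_(p <- Delta h) pi (S p.1) (pi (p.2 * g) m) }.

Definition is_pmor (P Q : lmodType k) (piP : H -> P -> P) (piQ : H -> Q -> Q)
  (f : P -> Q) : Prop :=
  lin f /\ forall h m, f (piP h m) = piQ h (f m).

Definition Th (M : lmodType k) (act : H -> M -> M) (T : M -> M) (h : H) (m : M) : M :=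
  \sum_(p <- Delta h) act p.1 (T (act (S p.2) m)).

(* objects of T(_H M): (M, T) with M an H-module (assumed separately) and *)
(* T a linear projection satisfying the c-condition.                    *)
Definition ccond (M : lmodType k) (act : H -> M -> M) (T : proj M) : Prop :=
  forall h m, Th act T h (T m) = T (Th act T h m).

Definition piT (M : lmodType k) (act : H -> M -> M) (T : proj M) (h : H)
  (x : fixT T) : fixT T :=
  @FixT k M T (T (act h (fval x))) (proj_fixP T _).

Definition is_Tmor (M N : lmodType k) (actM : H -> M -> M) (actN : H -> N -> N)
  (T : proj M) (T' : proj N) (f : fixT T -> fixT T') : Prop :=
  lin f /\ forall h (x : fixT T), fval (f (@piT M actM T h x)) = T' (actN h (fval (f x))).

End Hopf.

Arguments piT {k H M} act T h x.
Arguments is_Tmor {k H M N} actM actN T T' f.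

Definition Imor (k : fieldType) (M N : lmodType k) (f : M -> N)
  (x : fixT (idproj M)) : fixT (idproj N) := mkfixid (f (fval x)).

Definition Rmor (k : fieldType) (M N : lmodType k) (T : proj M) (T' : proj N)
  (f : fixT T -> fixT T') : fixT T -> fixT T' := f.

Arguments Rmor {k M N} T T' f.
Arguments Imor {k M N} f x.

(* The functor statements are bookkeeping: id_M(M) is M itself, and a
   morphism of T(_H M) is by definition a linear map intertwining the maps
   x |-> T(h |> x), i.e. a morphism between the partial modules R(M,T).

   The content is that R(M,T) is a partial module.  Put
   T^{u,v}_h(m) = sum u(h_(1)) |> T(v(h_(2)) |> m).  If T^{u,v}_h commutes
   with T, then on T(M) the axioms of pi_T involving u(h_(1)), v(h_(2))
   hold: both sides are T applied to the same expression.  The c-condition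
   is this commutation for (u,v) = (id,S), giving the first two axioms.
   The last two need it for (u,v) = (S,id), which follows from the
   c-condition by coassociativity together with
     h |> T(z) = sum T_{h_(1)}(h_(2) |> z),
     sum S(h_(1)) |> T_{h_(2)}(w) = T(S(h) |> w),
   two consequences of the antipode and counit axioms. *)

From HB Require Import structures.
From mathcomp Require Import all_boot all_order all_algebra.
Import GRing.Theory.
Local Open Scope ring_scope.

Set Implicit Arguments.
Unset Strict Implicit.

Section LinearPredicate.
Variables (k : fieldType) (U V : lmodType k) (f : U -> V).
Hypothesis f_lin : lin f.

Definition lin_linear : {linear U -> V} :=
  HB.pack f (GRing.isLinear.Build k U V *:%R f f_lin).

Lemma lin_scale a u : f (a *: u) = a *: f u.
Proof. exact: (linearZ_LR lin_linear). Qed.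

Lemma lin_sum (I : Type) (s : seq I) (F : I -> U) :
  f (\sum_(i <- s) F i) = \sum_(i <- s) f (F i).
Proof. exact: (linear_sum lin_linear). Qed.

End LinearPredicate.

Lemma fval_sum (k : fieldType) (M : lmodType k) (T : proj M) (I : Type)
  (s : seq I) (F : I -> fixT T) :
  fval (\sum_(i <- s) F i) = \sum_(i <- s) fval (F i).
Proof. exact: (raddf_sum val). Qed.

Lemma fval_fixed (k : fieldType) (M : lmodType k) (T : proj M) (x : fixT T) :
  T (fval x) = fval x.
Proof. exact/eqP/fvalP. Qed.

Section HopfModule.
Variables (k : fieldType) (H : algType k).
Variables (Delta : H -> seq (H * H)) (eps : H -> k) (S : H -> H).
Hypothesis hopfH : is_hopf Delta eps S.

Lemma antipode_lin : lin S.
Proof. by move=> a h h'; rewrite (S_lin hopfH). Qed.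

Lemma Delta_sum_lin (V : lmodType k) (phi : H -> H -> V) :
  bilin phi -> lin (fun h => \sum_(p <- Delta h) phi p.1 p.2).
Proof.
move=> phi_bilin a h h' /=; rewrite (Delta_lin hopfH a h h' phi_bilin).
rewrite big_cat big_map scaler_sumr; congr (_ + _); apply: eq_bigr => p _.
have [phi_linl _] := phi_bilin.
by rewrite (lin_scale (fun b x x' => phi_linl b x x' p.2)).
Qed.

Lemma coassoc_sum h (V : lmodType k) (phi : H -> H -> H -> V) : trilin phi ->
  \sum_(p <- Delta h) \sum_(q <- Delta p.1) phi q.1 q.2 p.2
  = \sum_(p <- Delta h) \sum_(q <- Delta p.2) phi p.1 q.1 q.2.
Proof.
by move=> phi_trilin; have := Delta_coassoc hopfH h phi_trilin; rewrite !big_allpairs_dep.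
Qed.

Variables (M : lmodType k) (act : H -> M -> M).
Hypothesis hmodM : is_hmod act.

Lemma act_linl m : lin (act^~ m).
Proof. by move=> a h h'; rewrite (hmod_linl hmodM). Qed.

Lemma act_antipode g z : \sum_(p <- Delta g) act (S p.1) (act p.2 z) = eps g *: z.
Proof.
rewrite -{2}(hmod_1 hmodM z) -(lin_scale (act_linl z)) -(antipode_l hopfH).
rewrite (lin_sum (act_linl z)); apply: eq_bigr => p _.
by rewrite (hmod_mul hmodM).
Qed.

Variable T : proj M.

Definition twist (u v : H -> H) h m : M :=
  \sum_(p <- Delta h) act (u p.1) (T (act (v p.2) m)).

Definition twist_commutes (u v : H -> H) : Prop :=
  forall h m, twist u v h (T m) = T (twist u v h m).

Local Notation Th := (Th Delta S act T).

Lemma Th_linr h : lin (Th h).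
Proof.
move=> a u u'; rewrite /Th scaler_sumr -big_split /=; apply: eq_bigr => p _.
by rewrite (hmod_linr hmodM) linearP (hmod_linr hmodM).
Qed.

Lemma Th_linl m : lin (Th^~ m).
Proof.
apply: (Delta_sum_lin (phi := fun x y => act x (T (act (S y) m)))).
split=> a x y y' /=.
  by rewrite (hmod_linl hmodM).
by rewrite (S_lin hopfH) (hmod_linl hmodM) linearP (hmod_linr hmodM).
Qed.

Lemma act_proj h z : act h (T z) = \sum_(q <- Delta h) Th q.1 (act q.2 z).
Proof.
have tri : trilin (fun a b c => act a (T (act (S b) (act c z)))).
  by split=> * /=; rewrite !(S_lin hopfH, hmod_linl hmodM, hmod_linr hmodM, linearP).
rewrite /Th (coassoc_sum h tri) -{1}(counit_r hopfH h) (lin_sum (act_linl _)).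
apply: eq_bigr => p _ /=.
by rewrite (lin_scale (act_linl _)) -(lin_scale (hmod_linr hmodM _)) -linearZ
  -act_antipode linear_sum (lin_sum (hmod_linr hmodM _)).
Qed.

Lemma antipode_Th h w :
  \sum_(q <- Delta h) act (S q.1) (Th q.2 w) = T (act (S h) w).
Proof.
have tri : trilin (fun a b c => act (S a) (act b (T (act (S c) w)))).
  by split=> * /=; rewrite !(S_lin hopfH, hmod_linl hmodM, hmod_linr hmodM, linearP).
under eq_bigr do rewrite /Th (lin_sum (hmod_linr hmodM _)).
rewrite -(coassoc_sum h tri) /=.
under eq_bigr do rewrite act_antipode.
rewrite -{2}(counit_l hopfH h) (lin_sum antipode_lin) (lin_sum (act_linl w)).
rewrite [RHS]linear_sum; apply: eq_bigr => p _.
by rewrite (lin_scale antipode_lin) (lin_scale (act_linl w)) [RHS]linearZ.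
Qed.

Lemma ccond_twist_antipode : ccond Delta S act T -> twist_commutes S id.
Proof.
move=> cc g y; rewrite /twist /=.
have tri : trilin (fun a b c => act (S a) (Th b (T (act c y)))).
  split=> * /=.
  - by rewrite (S_lin hopfH) (hmod_linl hmodM).
  - by rewrite (Th_linl _) (hmod_linr hmodM).
  - by rewrite (hmod_linl hmodM) linearP (Th_linr _) (hmod_linr hmodM).
transitivity (\sum_(p <- Delta g) \sum_(q <- Delta p.2)
                 act (S p.1) (Th q.1 (T (act q.2 y)))).
  apply: eq_bigr => p _.
  rewrite (act_proj p.2) linear_sum (lin_sum (hmod_linr hmodM _)).
  by apply: eq_bigr => q _; rewrite cc.
rewrite -(coassoc_sum g tri) /= linear_sum.
by apply: eq_bigr => p _; rewrite antipode_Th.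
Qed.

Local Notation pi := (piT act T).

Lemma piT_mul_twistl u v : twist_commutes u v -> forall h g x,
  \sum_(p <- Delta g) pi h (pi (u p.1) (pi (v p.2) x))
  = \sum_(p <- Delta g) pi (h * u p.1) (pi (v p.2) x).
Proof.
move=> comm h g x; apply: val_inj; rewrite /= !fval_sum /=.
have fixed_twist : T (twist u v g (fval x)) = twist u v g (fval x).
  by rewrite -comm fval_fixed.
transitivity (T (act h (T (twist u v g (fval x))))).
  by rewrite /twist linear_sum (lin_sum (hmod_linr hmodM h)) linear_sum.
rewrite fixed_twist /twist (lin_sum (hmod_linr hmodM h)) linear_sum.
by apply: eq_bigr => p _; rewrite (hmod_mul hmodM).
Qed.

Lemma piT_mul_twistr u v : twist_commutes u v -> forall h g x,
  \sum_(p <- Delta h) pi (u p.1) (pi (v p.2) (pi g x))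
  = \sum_(p <- Delta h) pi (u p.1) (pi (v p.2 * g) x).
Proof.
move=> comm h g x; apply: val_inj; rewrite /= !fval_sum /=.
transitivity (T (twist u v h (T (act g (fval x))))).
  by rewrite /twist linear_sum.
rewrite comm pidem /twist linear_sum.
by apply: eq_bigr => p _; rewrite (hmod_mul hmodM).
Qed.

Lemma piT_pmod : ccond Delta S act T -> is_pmod Delta S pi.
Proof.
move=> cc; have dual := ccond_twist_antipode cc.
split.
- by move=> a h h' x; apply: val_inj; rewrite /= (hmod_linl hmodM) linearP.
- by move=> h a x y; apply: val_inj; rewrite /= (hmod_linr hmodM) linearP.
- by move=> x; apply: val_inj; rewrite /= (hmod_1 hmodM) fval_fixed.
- exact: (piT_mul_twistl (u := id) cc).
- exact: (piT_mul_twistr (u := id) cc).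
- exact: (piT_mul_twistl dual).
- exact: (piT_mul_twistr dual).
Qed.

End HopfModule.

Lemma fvalK_idproj (k : fieldType) (M : lmodType k) :
  cancel (@fval k M (idproj M)) (@mkfixid k M).
Proof. by move=> x; apply: val_inj. Qed.

Lemma bij_fval_idproj (k : fieldType) (M : lmodType k) :
  bijective (@fval k M (idproj M)).
Proof. by exists (@mkfixid k M); [exact: fvalK_idproj | move]. Qed.

Section Morphisms.
Variables (k : fieldType) (H : algType k) (M N : lmodType k).
Variables (actM : H -> M -> M) (actN : H -> N -> N).

Lemma Imor_inj (f g : M -> N) : Imor f =1 Imor g -> f =1 g.
Proof. by move=> eq_fg m; have /(congr1 val) := eq_fg (mkfixid m). Qed.

Lemma hmor_Tmor_Imor f : is_hmor actM actN f ->
  is_Tmor actM actN (idproj M) (idproj N) (Imor f).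
Proof.
move=> [f_lin f_act]; split=> [a x y|h x]; last exact: f_act.
by apply: val_inj; exact: f_lin.
Qed.

Lemma Tmor_idproj_Imor F : is_Tmor actM actN (idproj M) (idproj N) F ->
  exists f, is_hmor actM actN f /\ F =1 Imor f.
Proof.
move=> [F_lin F_act]; exists (fun m => fval (F (mkfixid m))); split; last first.
  by move=> x; rewrite /Imor !fvalK_idproj.
split=> [a u u'|h m].
  have -> : mkfixid (a *: u + u') = a *: mkfixid u + mkfixid u' by apply: val_inj.
  by rewrite F_lin.
have -> : mkfixid (actM h m) = piT actM (idproj M) h (mkfixid m) by apply: val_inj.
exact: F_act.
Qed.

Lemma Tmor_pmorE (T : proj M) (T' : proj N) (F : fixT T -> fixT T') :
  is_Tmor actM actN T T' F <-> is_pmor (piT actM T) (piT actN T') F.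
Proof.
split=> [] [F_lin F_act]; split=> // h x; first exact/val_inj/F_act.
by rewrite F_act.
Qed.

End Morphisms.

Theorem mainTheorem8 (k : fieldType) (H : algType k)
  (Delta : H -> seq (H * H)) (eps : H -> k) (S : H -> H) :
  is_hopf Delta eps S -> bijective S ->
  (* ---- I : _H M -> T(_H M) is a functor: I(M) = (M, id_M), I(f) = f *)
  (forall (M : lmodType k) (act : H -> M -> M),
     is_hmod act -> ccond Delta S act (idproj M)) /\
  (forall (M N : lmodType k) (actM : H -> M -> M) (actN : H -> N -> N) (f : M -> N),
     is_hmod actM -> is_hmod actN -> is_hmor actM actN f ->
     is_Tmor actM actN (idproj M) (idproj N) (Imor f)) /\
  (forall (M : lmodType k), Imor (@idfun M) =1 idfun) /\
  (forall (M N P : lmodType k) (f : M -> N) (g : N -> P),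
     Imor (g \o f) =1 Imor g \o Imor f) /\
  (* ---- I is fully faithful *)
  (forall (M N : lmodType k) (actM : H -> M -> M) (actN : H -> N -> N),
     is_hmod actM -> is_hmod actN ->
     (forall f g : M -> N, is_hmor actM actN f -> is_hmor actM actN g ->
        Imor f =1 Imor g -> f =1 g) /\
     (forall F : fixT (idproj M) -> fixT (idproj N),
        is_Tmor actM actN (idproj M) (idproj N) F ->
        exists f : M -> N, is_hmor actM actN f /\ F =1 Imor f)) /\
  (* ---- R : T(_H M) -> _H M^par is a functor: R(M,T) = (T(M), pi_T), R(f) = f *)
  (forall (M : lmodType k) (act : H -> M -> M) (T : proj M),
     is_hmod act -> ccond Delta S act T -> is_pmod Delta S (piT act T)) /\
  (forall (M N : lmodType k) (actM : H -> M -> M) (actN : H -> N -> N)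
          (T : proj M) (T' : proj N) (F : fixT T -> fixT T'),
     is_hmod actM -> is_hmod actN -> ccond Delta S actM T -> ccond Delta S actN T' ->
     is_Tmor actM actN T T' F -> is_pmor (piT actM T) (piT actN T') (Rmor T T' F)) /\
  (forall (M : lmodType k) (T : proj M), Rmor T T (@idfun (fixT T)) =1 idfun) /\
  (forall (M N P : lmodType k) (T : proj M) (T' : proj N) (T'' : proj P)
          (F : fixT T -> fixT T') (G : fixT T' -> fixT T''),
     Rmor T T'' (G \o F) =1 Rmor T' T'' G \o Rmor T T' F) /\
  (* ---- R is fully faithful *)
  (forall (M N : lmodType k) (actM : H -> M -> M) (actN : H -> N -> N)
          (T : proj M) (T' : proj N),
     is_hmod actM -> is_hmod actN -> ccond Delta S actM T -> ccond Delta S actN T' ->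
     (forall F G : fixT T -> fixT T',
        is_Tmor actM actN T T' F -> is_Tmor actM actN T T' G ->
        Rmor T T' F =1 Rmor T T' G -> F =1 G) /\
     (forall G : fixT T -> fixT T',
        is_pmor (piT actM T) (piT actN T') G ->
        exists F, is_Tmor actM actN T T' F /\ G =1 Rmor T T' F)) /\
  (* ---- i = R o I, under the identification id_M(M) = M given by fval *)
  (forall (M : lmodType k) (act : H -> M -> M),
     is_hmod act ->
     [/\ bijective (@fval k M (idproj M)), lin (@fval k M (idproj M)) &
         forall h (x : fixT (idproj M)),
           fval (piT act (idproj M) h x) = act h (fval x)]) /\
  (forall (M N : lmodType k) (actM : H -> M -> M) (actN : H -> N -> N) (f : M -> N),
     is_hmod actM -> is_hmod actN -> is_hmor actM actN f ->
     forall x : fixT (idproj M),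
       fval (Rmor (idproj M) (idproj N) (Imor f) x) = f (fval x)).
Proof.
move=> hopfH _.
split; first by [].
split; first by move=> *; exact: hmor_Tmor_Imor.
split; first by move=> M x; apply: val_inj.
split; first by move=> M N P f g x; apply: val_inj.
split.
  move=> M N actM actN _ _; split; last exact: Tmor_idproj_Imor.
  by move=> f g _ _; exact: Imor_inj.
split; first by move=> M act T hmodM; exact: (piT_pmod hopfH).
split; first by move=> M N actM actN T T' F _ _ _ _ /Tmor_pmorE.
split; first by [].
split; first by [].
split.
  move=> M N actM actN T T' _ _ _ _; split=> [//|G /Tmor_pmorE G_Tmor].
  by exists G.
split; last by [].
by move=> M act _; split=> //; exact: bij_fval_idproj.
Qed.
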